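(* Let $V_{0,0}$ be a linear subspace of $V_0$ and for $\mu\in\{1,\dots,d\}$ let $V_{0,\mu}=\{\gamma=(\gamma^\nu)_{\nu=1}^d\in V:\gamma^\mu\in V_{0,0},\ \gamma^\nu=0\text{ for }\nu\ne\mu\}$. Let $f\in C^2(V,M_N(\mathbb{C}))$ and suppose that for every $x\in V$ and every $\mu\in\{1,\dots,d\}$ there exist $K^V_{\mu\mu}(x;\cdot,\cdot)\in L_2([0,1]\times[0,1],M_N(\mathbb{C}))$ and $K^L_{\mu\mu}(x;\cdot)\in L_\infty([0,1],M_N(\mathbb{C}))$ such that for all $u,v\in V_{0,\mu}$ (identified with their $\mu$-th components, which are functions on $[0,1]$) $$\langle f''_{V_{0,\mu}V_{0,\mu}}(x)u,v\rangle=\int_0^1\!\!\int_0^1K^V_{\mu\mu}(x;s,t)u(t)v(s)\,dt\,ds+\int_0^1K^L_{\mu\mu}(x;t)u(t)v(t)\,dt,$$ where $f''_{V_{0,\mu}V_{0,\mu}}$ denotes the second partial derivative of $f$ along $V_{0,\mu}$. If $\{e_n\}$ is a weakly uniformly dense orthonormal basis of $L_2([0,1],\mathbb{R})$ with $e_n\in V_{0,0}$ for all $n$, then $f\in\mathrm{Dom}\,\Delta^{\{e_n\},1}_L$ and for all $x\in V$ $$\Delta^{\{e_n\},1}_{L}f(x)=\sum_{\mu=1}^d\int_0^1K^L_{\mu\mu}(x;t)\,dt.$$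
   Context: Let $V_0$ be a real locally convex space continuously and densely embedded in $L_2([0,1],\mathbb{R})$, let $\{p_1,\dots,p_d\}$ be an orthonormal basis of $\mathbb{R}^d$, and let $V=\mathbb{R}^d\otimes_\pi V_0$, whose elements are written $\gamma=(\gamma^\nu)_{\nu=1}^d$ with $\gamma^\nu\in V_0$. $M_N(\mathbb{C})$ is the space of complex $N\times N$ matrices; $C^2(V,M_N(\mathbb{C}))$ is the space of twice Fréchet differentiable $M_N(\mathbb{C})$-valued functions on $V$, and $\langle f''(x)u,v\rangle\in M_N(\mathbb{C})$ denotes the second derivative at $x$ evaluated on $(u,v)$. For an orthonormal basis $\{e_n\}$ of $L_2([0,1],\mathbb{R})$ with $e_n\in V_0$, the (classical) Lévy Laplacian is $$\Delta^{\{e_n\},1}_{L}f(x)=\lim_{n\to\infty}\frac1n\sum_{k=1}^n\sum_{\mu=1}^d\langle f''(x)p_\mu e_k,p_\mu e_k\rangle,$$ with domain the set of $f\in C^2(V,M_N(\mathbb{C}))$ for which the limit exists for all $x\in V$. An orthonormal basis $\{e_n\}$ of $L_2([0,1],\mathbb{R})$ is weakly uniformly dense if $\lim_{n\to\infty}\int_0^1h(t)\big(\frac1n\sum_{k=1}^ne_k(t)^2-1\big)dt=0$ for every $h\in L_\infty([0,1],\mathbb{R})$. *)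

From HB Require Import structures.
From mathcomp Require Import all_boot all_order all_algebra.
From mathcomp Require Import all_classical all_reals all_analysis.

Set Implicit Arguments.
Unset Strict Implicit.
Unset Printing Implicit Defensive.
Import Order.TTheory GRing.Theory Num.Theory.
Import numFieldNormedType.Exports.
Local Open Scope classical_set_scope.
Local Open Scope ring_scope.

Section LevyDefs.
Variable R : realType.

Notation leb := (@lebesgue_measure R).

Definition I01 : set R := [set t | 0 <= t <= 1].

Definition L2fun (g : R -> R) : Prop :=
  measurable_fun I01 g /\ leb.-integrable I01 (fun t => (g t ^+ 2)%:E).

Definition Linffun (g : R -> R) : Prop :=
  measurable_fun I01 g /\
  exists M : R, {ae leb, forall t, I01 t -> `|g t| <= M}.

Definition L2fun2 (K : R -> R -> R) : Prop :=
  measurable_fun (I01 `*` I01) (fun p : R * R => K p.1 p.2) /\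
  (leb \x leb)%E.-integrable (I01 `*` I01)
     (fun p : R * R => (K p.1 p.2 ^+ 2)%:E).

(** M_N(C) is represented (as a finite-dimensional real normed space) by
    real (N+N) x N block matrices  col_mx (Re A) (Im A). *)
Local Notation MC N := 'M[R]_(N + N, N).

Definition reE N (A : MC N) (i j : 'I_N) : R := usubmx A i j.
Definition imE N (A : MC N) (i j : 'I_N) : R := dsubmx A i j.

Definition MCint N (F : R -> MC N) : MC N :=
  col_mx (\matrix_(i, j) Rintegral leb I01 (fun t => reE (F t) i j))
         (\matrix_(i, j) Rintegral leb I01 (fun t => imE (F t) i j)).

Definition MCint2 N (F : R -> R -> MC N) : MC N :=
  MCint (fun s => MCint (fun t => F s t)).

Definition L2MC2 N (K : R -> R -> MC N) : Prop :=
  forall i j, L2fun2 (fun s t => reE (K s t) i j) /\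
              L2fun2 (fun s t => imE (K s t) i j).

Definition LinfMC N (K : R -> MC N) : Prop :=
  forall i j, Linffun (fun t => reE (K t) i j) /\
              Linffun (fun t => imE (K t) i j).

(** V_0 is a real locally convex space (tvsType) continuously, densely
    (and injectively) embedded in L_2([0,1],R) via iota. *)
Definition L2_embedding (V0 : tvsType R) (iota : V0 -> R -> R) : Prop :=
  [/\ (forall (a : R) (u v : V0) t,
          iota (a *: u + v) t = a * iota u t + iota v t),
      (forall v, L2fun (iota v)),
      (forall v, {ae leb, forall t, I01 t -> iota v t = 0} -> v = 0),
      (forall eps : R, 0 < eps ->
          \forall v \near (0 : V0),
             Rintegral leb I01 (fun t => iota v t ^+ 2) < eps) &
      (forall g, L2fun g -> forall eps : R, 0 < eps ->
          exists v : V0,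
            Rintegral leb I01 (fun t => (iota v t - g t) ^+ 2) < eps)].

Definition linear_subspace (V0 : lmodType R) (S : set V0) : Prop :=
  S 0 /\ (forall (a : R) u v, S u -> S v -> S (a *: u + v)).

(** V = R^d (x)_pi V_0, written in coordinates w.r.t. the orthonormal
    basis {p_1,...,p_d}:  gamma = (gamma^nu)_nu. *)
Local Notation Vsp d V0 := ('I_d -> GRing.Lmodule.sort V0)%type.

Definition ptens (d : nat) (V0 : tvsType R) (mu : 'I_d) (g : V0) : Vsp d V0 :=
  fun nu => if nu == mu then g else 0.

Definition V0mu (d : nat) (V0 : tvsType R) (V00 : set V0) (mu : 'I_d)
  : set (Vsp d V0) :=
  [set gam | V00 (gam mu) /\ forall nu, nu != mu -> gam nu = 0].

Definition dderiv (X : lmodType R) (W : normedModType R) (F : X -> W)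
    (x u : X) : W :=
  derive1 (fun h : R => F (x + h *: u)) 0.

(** <f''(x) u, v> as the iterated directional derivative D_u D_v f (x) *)
Definition D2 (X : lmodType R) (W : normedModType R) (F : X -> W)
    (x u v : X) : W :=
  dderiv (fun y => dderiv F y v) x u.

Definition C2 (X : lmodType R) (W : normedModType R) (F : X -> W) : Prop :=
  [/\ (forall x v, derivable (fun h : R => F (x + h *: v)) 0 1),
      (forall x u v, derivable (fun h : R => dderiv F (x + h *: u) v) 0 1),
      (forall x (a : R) u1 u2 v,
          D2 F x (a *: u1 + u2) v = a *: D2 F x u1 v + D2 F x u2 v) &
      (forall x (a : R) u v1 v2,
          D2 F x u (a *: v1 + v2) = a *: D2 F x u v1 + D2 F x u v2)].

Definition ONB_L2 (V0 : tvsType R) (iota : V0 -> R -> R) (e : nat -> V0)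
  : Prop :=
  (forall n m, Rintegral leb I01 (fun t => iota (e n) t * iota (e m) t)
                 = (n == m)%:R) /\
  (forall g, L2fun g ->
     (forall n, Rintegral leb I01 (fun t => g t * iota (e n) t) = 0) ->
     {ae leb, forall t, I01 t -> g t = 0}).

(** weakly uniformly dense (indices shifted: e 0, e 1, ... ) *)
Definition weakly_uniformly_dense (V0 : tvsType R) (iota : V0 -> R -> R)
    (e : nat -> V0) : Prop :=
  forall h, Linffun h ->
    (fun n : nat => Rintegral leb I01 (fun t =>
        h t * ((n%:R)^-1 * (\sum_(k < n) iota (e k) t ^+ 2) - 1)))
      @ \oo --> (0 : R).

Definition levy_mean d (V0 : tvsType R) N (f : Vsp d V0 -> MC N)
    (e : nat -> V0) (x : Vsp d V0) (n : nat) : MC N :=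
  (n%:R)^-1 *: \sum_(k < n) \sum_(mu < d)
      D2 f x (ptens mu (e k)) (ptens mu (e k)).

Definition levy_dom d (V0 : tvsType R) N (f : Vsp d V0 -> MC N)
    (e : nat -> V0) : Prop :=
  C2 f /\ forall x, cvg (levy_mean f e x @ \oo).

Definition levy_laplacian d (V0 : tvsType R) N (f : Vsp d V0 -> MC N)
    (e : nat -> V0) (x : Vsp d V0) : MC N :=
  lim (levy_mean f e x @ \oo).

End LevyDefs.

Notation MC R N := 'M[R]_(N + N, N).
Notation Vsp d V0 := ('I_d -> GRing.Lmodule.sort V0)%type.

From HB Require Import structures.
From mathcomp Require Import all_boot all_order all_algebra.
From mathcomp Require Import all_classical all_reals all_analysis.
From mathcomp Require Import measurable_realfun ring lra.
Import Order.TTheory GRing.Theory Num.Theory.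
Import numFieldNormedType.Exports.
Local Open Scope classical_set_scope.
Local Open Scope ring_scope.

Set Implicit Arguments.
Unset Strict Implicit.
Unset Printing Implicit Defensive.

(* For [e_k] in V_{0,0}, the kernel representation splits every real or
   imaginary entry of <f''(x) p_mu e_k, p_mu e_k> into a Volterra term
   <K e_k, e_k> = \int\int K(s,t) e_k(t) e_k(s) and a Levy term
   \int K^L e_k^2.  Bessel's inequality for each section K(s,.) gives
   sum_k |K e_k|^2 <= |K|^2_{L_2}, so by Cauchy-Schwarz the Volterra terms are
   square-summable: they tend to 0, and so do their Cesaro means.  The Cesaro
   means of the Levy terms tend to \int K^L by weak uniform density. *)

Lemma ler_norm_mul_sqrD (F : realDomainType) (x y : F) :
  `|x * y| <= x ^+ 2 + y ^+ 2.
Proof.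
rewrite normrM -(real_normK (num_real x)) -(real_normK (num_real y)).
have := normr_ge0 x; have := normr_ge0 y; nra.
Qed.

Lemma sqr_linear_le (F : realDomainType) (a x y : F) :
  (a * x + y) ^+ 2 <= 2 * a ^+ 2 * x ^+ 2 + 2 * y ^+ 2.
Proof. have := sqr_ge0 (a * x - y); nra. Qed.

Lemma discriminant_le (F : realFieldType) (A B C : F) : 0 <= A ->
  (forall l, 0 <= A * l ^+ 2 - 2 * B * l + C) -> B ^+ 2 <= A * C.
Proof.
move=> A_ge0 quad_ge0; have [A_gt0|] := ltP 0 A.
  have := quad_ge0 (B / A).
  have -> : A * (B / A) ^+ 2 - 2 * B * (B / A) + C = C - B ^+ 2 / A.
    by field; rewrite gt_eqF.
  by rewrite subr_ge0 ler_pdivrMr // => ?; nra.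
move=> A_le0; have A0 : A = 0 by apply/eqP; rewrite eq_le A_le0 A_ge0.
subst A.
have [->|B_neq0] := eqVneq B 0; first by rewrite expr0n /= mul0r.
have := quad_ge0 ((C + 1) / (2 * B)).
have -> : 0 * ((C + 1) / (2 * B)) ^+ 2 - 2 * B * ((C + 1) / (2 * B)) + C = -1.
  by field.
lra.
Qed.

Section mean_sequences.
Variable R : realType.

Lemma cvg_mean (u : R ^nat) (l : R) : u @ \oo --> l ->
  (fun n => n%:R^-1 * \sum_(k < n) u k) @ \oo --> l.
Proof.
move=> /cesaro mean_cvg; rewrite -cvg_shiftS.
suff -> : [sequence n.+1%:R^-1 * \sum_(k < n.+1) u k]_n = arithmetic_mean u by [].
by apply/funext => n; rewrite /arithmetic_mean /= seriesEord.
Qed.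

Lemma cvg0_bounded_sum_sqr (a : R ^nat) (C : R) :
  (forall n, \sum_(k < n) a k ^+ 2 <= C) -> a @ \oo --> 0.
Proof.
move=> sum_le; apply: norm_cvg0.
have sqr_cvg0 : (fun k => a k ^+ 2) @ \oo --> 0.
  apply: cvg_series_cvg_0; apply: nondecreasing_is_cvgn.
    by rewrite seriesEnat; apply: nondecreasing_series => k _ _; exact: sqr_ge0.
  by exists C => _ [n _ <-]; rewrite seriesEord; exact: sum_le.
have := continuous_cvg _ (@sqrt_continuous R 0) sqr_cvg0.
have -> : Num.sqrt \o (fun k => a k ^+ 2) = fun k => `|a k|.
  by apply/funext => k /=; rewrite sqrtr_sqr.
by rewrite sqrtr0; apply.
Qed.

End mean_sequences.

Section levy_laplacian.
Variable R : realType.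
Local Notation leb := (@lebesgue_measure R).
Local Notation I := (@I01 R).
Local Notation RI := (Rintegral leb I).

Lemma I01_itv : I = `[0, 1]%classic.
Proof. by apply/seteqP; split => t /=; rewrite /I01 /= in_itv. Qed.

(* Stated for the sigma-algebra of [lebesgue_measure]; [exact:] also proves
   measurability for the default one on [R], which is convertible but does
   not unify with it. *)
Lemma measurable_I01 : measurable (I : set (measurableTypeR R)).
Proof. by rewrite I01_itv; exact: measurable_itv. Qed.

Lemma lebesgue_I01 : leb I = 1%E.
Proof.
rewrite I01_itv lebesgue_measure_itv /= lte_fin ltr01 /=; congr (_%:E); lra.
Qed.

Lemma Rintegral_non_integrable (f : R -> R) : measurable_fun I f ->
  ~ leb.-integrable I (EFin \o f) -> RI f = 0.
Proof.
move=> mf not_int; rewrite /Rintegral.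
have : ~ (\int[leb]_(x in I) (f x)%:E \is a fin_num)%E.
  rewrite -integral_fin_num_abs //; last exact: measurable_I01.
  by move=> fin; apply: not_int; apply/integrableP; split => //; exact/measurable_EFinP.
by rewrite fin_numE => /negP; rewrite negb_and !negbK => /orP[] /eqP ->.
Qed.

(* Unlike [RintegralZl], no integrability is needed: both sides vanish
   when [f] is not integrable. *)
Lemma RintegralZl_meas (r : R) (f : R -> R) : measurable_fun I f ->
  RI (fun t => r * f t) = r * RI f.
Proof.
move=> mf; have [int_f|not_int_f] := pselect (leb.-integrable I (EFin \o f)).
  by rewrite RintegralZl //; exact: measurable_I01.
have [->|r_neq0] := eqVneq r 0.
  under eq_Rintegral do rewrite mul0r.
  by rewrite Rintegral_cst ?mul0r //; exact: measurable_I01.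
rewrite Rintegral_non_integrable ?(Rintegral_non_integrable mf) ?mulr0 //.
  exact: measurable_funM.
move=> int_rf; apply: not_int_f.
have := integrableZl measurable_I01 r^-1 int_rf.
apply: eq_integrable; first exact: measurable_I01.
by move=> t _ /=; rewrite -EFinM mulrA mulVf // mul1r.
Qed.

Lemma integrable_sum_EFin (T : Type) (s : seq T) (F : T -> R -> R) :
  (forall i, leb.-integrable I (EFin \o F i)) ->
  leb.-integrable I (EFin \o (fun t => \sum_(i <- s) F i t)).
Proof.
move=> int_F; have := integrable_sum measurable_I01 s (P := xpredT) (fun i _ => int_F i).
apply: eq_integrable; first exact: measurable_I01.
by move=> t _ /=; rewrite sumEFin.
Qed.

Lemma Rintegral_sum (T : Type) (s : seq T) (F : T -> R -> R) :
  (forall i, leb.-integrable I (EFin \o F i)) ->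
  RI (fun t => \sum_(i <- s) F i t) = \sum_(i <- s) RI (F i).
Proof.
move=> int_F; elim: s => [|i s IH].
  under eq_Rintegral do rewrite big_nil.
  by rewrite big_nil Rintegral_cst ?mul0r //; exact: measurable_I01.
under eq_Rintegral do rewrite big_cons.
rewrite RintegralD ?big_cons ?IH //; first exact: measurable_I01.
exact: integrable_sum_EFin.
Qed.

Lemma L2fun0 : L2fun (fun _ : R => 0).
Proof.
split; first exact: measurable_cst.
apply/integrableP; split; first exact: measurable_cst.
by under eq_integral do rewrite expr0n /= normr0; rewrite integral0.
Qed.

Lemma L2fun_lin (a : R) (f g : R -> R) : L2fun f -> L2fun g ->
  L2fun (fun t => a * f t + g t).
Proof.
move=> [mf int_f2] [mg int_g2].
have mh : measurable_fun I (fun t => a * f t + g t).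
  exact: measurable_funD (measurable_funM (measurable_cst a) mf) mg.
split => //; apply: (le_integrable measurable_I01
  (g := (fun t => (2 * a ^+ 2)%:E * (f t ^+ 2)%:E) \+ (fun t => 2%:E * (g t ^+ 2)%:E))%E).
- by apply/measurable_EFinP; exact: measurable_funX.
- move=> t _ /=; rewrite lee_fin.
  have := sqr_ge0 (f t); have := sqr_ge0 (g t); have := sqr_ge0 a => ? ? ?.
  rewrite ger0_norm ?sqr_ge0 // ger0_norm; last nra.
  exact: sqr_linear_le.
- by apply: (integrableD measurable_I01); apply: (integrableZl measurable_I01).
Qed.

Lemma L2fun_sum (T : Type) (s : seq T) (c : T -> R) (F : T -> R -> R) :
  (forall i, L2fun (F i)) -> L2fun (fun t => \sum_(i <- s) c i * F i t).
Proof.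
move=> L2F; elim: s => [|i s IH].
  by under eq_fun do rewrite big_nil; exact: L2fun0.
by under eq_fun do rewrite big_cons; exact: L2fun_lin.
Qed.

Lemma integrable_L2fun_mul (f g : R -> R) : L2fun f -> L2fun g ->
  leb.-integrable I (EFin \o (fun t => f t * g t)).
Proof.
move=> [mf int_f2] [mg int_g2].
apply: (le_integrable measurable_I01
  (g := (fun t => (f t ^+ 2)%:E) \+ (fun t => (g t ^+ 2)%:E))%E).
- by apply/measurable_EFinP; exact: measurable_funM.
- move=> t _ /=; rewrite lee_fin [leRHS]ger0_norm ?addr_ge0 ?sqr_ge0 //.
  exact: ler_norm_mul_sqrD.
- exact: (integrableD measurable_I01).
Qed.

Definition l2dot (f g : R -> R) : R := RI (fun t => f t * g t).

Definition l2orthonormal (e : nat -> R -> R) : Prop :=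
  forall j k, l2dot (e j) (e k) = (j == k)%:R.

Lemma l2dotC f g : l2dot f g = l2dot g f.
Proof. by rewrite /l2dot; under eq_Rintegral do rewrite mulrC. Qed.

Lemma l2dot_ge0 f : 0 <= l2dot f f.
Proof. by apply: Rintegral_ge0 => t _; rewrite -expr2 sqr_ge0. Qed.

Lemma l2dot_linl (a : R) (f1 f2 g : R -> R) : L2fun f1 -> L2fun f2 -> L2fun g ->
  l2dot (fun t => a * f1 t + f2 t) g = a * l2dot f1 g + l2dot f2 g.
Proof.
move=> L2f1 L2f2 L2g; rewrite /l2dot.
under eq_Rintegral do rewrite mulrDl -mulrA.
rewrite RintegralD.
- rewrite RintegralZl //; first exact: measurable_I01.
  exact: integrable_L2fun_mul.
- exact: measurable_I01.
- have := integrableZl measurable_I01 a (integrable_L2fun_mul L2f1 L2g).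
  by apply: eq_integrable; [exact: measurable_I01 | move=> t _ /=; rewrite EFinM].
- exact: integrable_L2fun_mul.
Qed.

Lemma l2dot_suml (T : Type) (s : seq T) (c : T -> R) (F : T -> R -> R) g :
  (forall i, L2fun (F i)) -> L2fun g ->
  l2dot (fun t => \sum_(i <- s) c i * F i t) g = \sum_(i <- s) c i * l2dot (F i) g.
Proof.
move=> L2F L2g; elim: s => [|i s IH].
  rewrite big_nil /l2dot; under eq_Rintegral do rewrite big_nil mul0r.
  by rewrite Rintegral_cst ?mul0r //; exact: measurable_I01.
under eq_fun do rewrite big_cons.
by rewrite l2dot_linl ?big_cons ?IH //; exact: L2fun_sum.
Qed.

Lemma l2dot_Cauchy_Schwarz f g : L2fun f -> L2fun g ->
  l2dot f g ^+ 2 <= l2dot f f * l2dot g g.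
Proof.
move=> L2f L2g; rewrite mulrC; apply: discriminant_le; first exact: l2dot_ge0.
move=> l; have L2h : L2fun (fun t => - l * g t + f t) by exact: L2fun_lin.
have := l2dot_ge0 (fun t => - l * g t + f t).
rewrite l2dot_linl // (l2dotC g) (l2dotC f) !l2dot_linl // (l2dotC g f).
nra.
Qed.

Lemma l2dot_Bessel (g : R -> R) (e : nat -> R -> R) n : L2fun g ->
  (forall k, L2fun (e k)) -> l2orthonormal e ->
  \sum_(k < n) l2dot g (e k) ^+ 2 <= l2dot g g.
Proof.
move=> L2g L2e e_on.
pose c k := l2dot g (e k).
pose S t := \sum_(k < n) c k * e k t.
have L2S : L2fun S by exact: L2fun_sum.
have L2r : L2fun (fun t => -1 * S t + g t) by exact: L2fun_lin.
have r_orth (k : 'I_n) : l2dot (e k) (fun t => -1 * S t + g t) = 0.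
  rewrite l2dotC l2dot_linl // l2dot_suml //.
  under eq_bigr do rewrite e_on.
  rewrite (bigD1 k) //= eqxx mulr1 big1 ?addr0 => [|j /negbTE jk]; last first.
    by rewrite (_ : (j == k :> nat) = false) ?mulr0.
  by rewrite /c l2dotC; ring.
have := l2dot_ge0 (fun t => -1 * S t + g t).
rewrite l2dot_linl // {1}/S l2dot_suml //.
under eq_bigr do rewrite r_orth mulr0.
rewrite big1 // mulr0 add0r l2dotC l2dot_linl // /S l2dot_suml //.
have -> : \sum_(k < n) c k * l2dot (e k) g = \sum_(k < n) l2dot g (e k) ^+ 2.
  by apply: eq_bigr => k _; rewrite l2dotC expr2.
by rewrite mulN1r addrC subr_ge0.
Qed.

Lemma measurable_I01_setX : measurable (I `*` I : set (R * R)).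
Proof. by apply: measurableX; exact: measurable_I01. Qed.

Lemma in_I01_setX s t : I s -> ((s, t) \in I `*` I) = (t \in I).
Proof.
by move=> Is; apply/idP/idP => [/set_mem[_ It]|/set_mem It]; apply/mem_set.
Qed.

Lemma measurable_fun_integral_section (F : R * R -> \bar R) :
  measurable_fun (I `*` I) F -> (forall p, 0 <= F p)%E ->
  measurable_fun I (fun s => \int[leb]_(t in I) F (s, t))%E.
Proof.
move=> mF F_ge0; pose G := F \_ (I `*` I).
have mG : measurable_fun setT G.
  exact: (measurable_restrictT F measurable_I01_setX).1 mF.
have G_ge0 p : (0 <= G p)%E by rewrite /G /patch; case: ifP.
have := measurable_fun_fubini_tonelli_F (m2 := leb) G mG G_ge0.
move/(measurable_funS measurableT (@subsetT _ I)).
apply: eq_measurable_fun => s /set_mem Is.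
rewrite /fubini_F [in RHS]integral_mkcond; apply: eq_integral => t _.
by rewrite /G /patch /= in_I01_setX.
Qed.

Lemma integral_I01_setX (F : R * R -> \bar R) :
  measurable_fun (I `*` I) F -> (forall p, 0 <= F p)%E ->
  (\int[leb \x leb]_(p in I `*` I) F p =
   \int[leb]_(s in I) \int[leb]_(t in I) F (s, t))%E.
Proof.
move=> mF F_ge0; pose G := F \_ (I `*` I).
have mG : measurable_fun setT G.
  exact: (measurable_restrictT F measurable_I01_setX).1 mF.
have G_ge0 p : (0 <= G p)%E by rewrite /G /patch; case: ifP.
rewrite integral_mkcond.
rewrite (@fubini_tonelli1 _ _ (measurableTypeR R) (measurableTypeR R) R leb leb G
  mG G_ge0).
rewrite [RHS]integral_mkcond.
apply: eq_integral => s _; rewrite /fubini_F /patch.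
case: ifPn => [/set_mem Is|Is].
  rewrite [RHS]integral_mkcond; apply: eq_integral => t _.
  by rewrite /G /patch /= in_I01_setX.
rewrite -[RHS](integral0 leb setT); apply: eq_integral => t _.
rewrite /G /patch; case: ifPn => // /set_mem [/= Is' _].
by move: Is; rewrite notin_setE.
Qed.

Lemma measurable_fun_Rintegral_section (F : R * R -> R) :
  measurable_fun (I `*` I) F -> measurable_fun I (fun s => RI (fun t => F (s, t))).
Proof.
move=> mF; have mEF : measurable_fun (I `*` I) (EFin \o F) by exact/measurable_EFinP.
have mpos := measurable_fun_integral_section (measurable_funepos mEF) (funepos_ge0 _).
have mneg := measurable_fun_integral_section (measurable_funeneg mEF) (funeneg_ge0 _).
have := measurableT_comp (fine_measurable measurableT) (emeasurable_funB mpos mneg).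
apply: eq_measurable_fun => s _ /=.
rewrite [RHS]/Rintegral [in RHS]integralE.
by congr (fine (_ - _)); apply: eq_integral => t _; rewrite ?funeposE ?funenegE.
Qed.

Lemma measurable_fun_section (K : R -> R -> R) s :
  measurable_fun (I `*` I) (fun p : R * R => K p.1 p.2) -> I s ->
  measurable_fun I (K s).
Proof.
move=> mK Is; have mpair : measurable_fun I (pair s : R -> R * R).
  exact: measurable_funS measurableT (@subsetT _ I) (pair1_measurable s).
by apply: (measurable_comp measurable_I01_setX _ mK mpair) => _ [t It <-].
Qed.

Lemma measurable_fun_snd_I01 (g : R -> R) : measurable_fun I g ->
  measurable_fun (I `*` I) (fun p : R * R => g p.2).
Proof.
move=> mg; have msnd : measurable_fun (I `*` I) (snd : R * R -> R).
  exact: measurable_funS measurableT (@subsetT _ (I `*` I)) measurable_snd.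
have mI01 : measurable I by exact: measurable_I01.
by apply: (measurable_comp mI01 _ mg msnd) => _ [[a b] [_ Ib] <-].
Qed.

Definition kernel_op (K : R -> R -> R) (g : R -> R) (s : R) : R :=
  RI (fun t => K s t * g t).

Lemma measurable_kernel_op (K : R -> R -> R) (g : R -> R) :
  measurable_fun (I `*` I) (fun p : R * R => K p.1 p.2) -> measurable_fun I g ->
  measurable_fun I (kernel_op K g).
Proof.
move=> mK mg.
apply: (measurable_fun_Rintegral_section (F := fun p : R * R => K p.1 p.2 * g p.2)).
exact: measurable_funM mK (measurable_fun_snd_I01 mg).
Qed.

Section Hilbert_Schmidt_kernel.
Variables (K : R -> R -> R) (e : nat -> R -> R).
Hypotheses (L2K : L2fun2 K) (L2e : forall k, L2fun (e k)) (e_on : l2orthonormal e).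

Lemma Bessel_kernel_section n s : I s ->
  ((\sum_(k < n) kernel_op K (e k) s ^+ 2)%:E <=
   \int[leb]_(t in I) (K s t ^+ 2)%:E)%E.
Proof.
move=> Is; have [->|Ks_fin] := eqVneq (\int[leb]_(t in I) (K s t ^+ 2)%:E)%E +oo%E.
  exact: leey.
have Ks_ge0 : (0 <= \int[leb]_(t in I) (K s t ^+ 2)%:E)%E.
  by apply: integral_ge0 => t _; rewrite lee_fin sqr_ge0.
have mKs := measurable_fun_section L2K.1 Is.
have L2Ks : L2fun (K s).
  split => //; apply/integrableP; split.
    by apply/measurable_EFinP; exact: measurable_funX.
  under eq_integral do rewrite abse_EFin ger0_norm ?sqr_ge0 //.
  by rewrite ltey.
apply: le_trans (_ : (l2dot (K s) (K s))%:E <= _)%E.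
  by rewrite lee_fin; exact: l2dot_Bessel.
rewrite /l2dot /Rintegral fineK; last by rewrite ge0_fin_numE // ltey.
by under eq_integral do rewrite -expr2.
Qed.

Lemma integrable_kernel_section_sqr :
  leb.-integrable I (fun s => \int[leb]_(t in I) (K s t ^+ 2)%:E)%E.
Proof.
have mK2 : measurable_fun (I `*` I) (fun p : R * R => (K p.1 p.2 ^+ 2)%:E).
  by apply/measurable_EFinP; exact: measurable_funX L2K.1.
have K2_ge0 p : (0 <= (K p.1 p.2 ^+ 2)%:E)%E by rewrite lee_fin sqr_ge0.
have sec_ge0 s : (0 <= \int[leb]_(t in I) (K s t ^+ 2)%:E)%E.
  by apply: integral_ge0 => t _; rewrite lee_fin sqr_ge0.
apply/integrableP; split; first exact: measurable_fun_integral_section mK2 K2_ge0.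
under eq_integral do rewrite gee0_abs //.
rewrite -(integral_I01_setX mK2 K2_ge0).
case/integrableP: L2K.2 => _; apply: le_lt_trans.
apply: ge0_le_integral => //; first exact: measurable_I01_setX.
  exact: measurableT_comp mK2.
by move=> p _; rewrite gee0_abs.
Qed.

Lemma L2fun_kernel_op k : L2fun (kernel_op K (e k)).
Proof.
have mKe := measurable_kernel_op L2K.1 (L2e k).1.
split => //; apply: (le_integrable measurable_I01 _ _ integrable_kernel_section_sqr).
  by apply/measurable_EFinP; exact: measurable_funX.
move=> s Is; rewrite gee0_abs ?lee_fin ?sqr_ge0 // gee0_abs.
  apply: le_trans (Bessel_kernel_section k.+1 Is).
  by rewrite lee_fin big_ord_recr /= lerDr; apply: sumr_ge0 => j _; exact: sqr_ge0.
by apply: integral_ge0 => t _; rewrite lee_fin sqr_ge0.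
Qed.

Lemma sum_l2norm_kernel_op_le n :
  \sum_(k < n) l2dot (kernel_op K (e k)) (kernel_op K (e k)) <=
  fine (\int[leb \x leb]_(p in I `*` I) (K p.1 p.2 ^+ 2)%:E)%E.
Proof.
have mK2 : measurable_fun (I `*` I) (fun p : R * R => (K p.1 p.2 ^+ 2)%:E).
  by apply/measurable_EFinP; exact: measurable_funX L2K.1.
rewrite (integral_I01_setX mK2) => [|p]; last by rewrite lee_fin sqr_ge0.
have int_sq k : leb.-integrable I
    (EFin \o fun s => kernel_op K (e k) s * kernel_op K (e k) s).
  exact: integrable_L2fun_mul (L2fun_kernel_op k) (L2fun_kernel_op k).
have int_sum := integrable_sum_EFin (index_enum 'I_n) (fun k : 'I_n => int_sq k).
rewrite /l2dot -Rintegral_sum // /Rintegral fine_le //.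
- by have := integrable_fin_num measurable_I01 int_sum.
- by have := integrable_fin_num measurable_I01 integrable_kernel_section_sqr.
apply: ge0_le_integral => //.
- exact: measurable_I01.
- by move=> s _; rewrite lee_fin; apply: sumr_ge0 => k _; rewrite -expr2 sqr_ge0.
- exact: measurable_int int_sum.
- by case/integrableP: integrable_kernel_section_sqr.
move=> s Is /=; under eq_bigr do rewrite -expr2.
exact: Bessel_kernel_section.
Qed.

Lemma kernel_diagonalE k :
  RI (fun s => RI (fun t => (e k t * e k s) * K s t)) = l2dot (e k) (kernel_op K (e k)).
Proof.
apply: eq_Rintegral => s /set_mem Is.
have mt : measurable_fun I (fun t => K s t * e k t).
  exact: measurable_funM (measurable_fun_section L2K.1 Is) (L2e k).1.
by rewrite -(RintegralZl_meas (e k s) mt); apply: eq_Rintegral => t _; ring.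
Qed.

Lemma cvg_kernel_diagonal_mean :
  (fun n => n%:R^-1 * \sum_(k < n) RI (fun s => RI (fun t => (e k t * e k s) * K s t)))
    @ \oo --> (0 : R).
Proof.
apply: (cvg_mean (u := fun k => RI (fun s => RI (fun t => (e k t * e k s) * K s t)))).
apply: cvg0_bounded_sum_sqr => n.
under eq_bigr do rewrite kernel_diagonalE.
apply: le_trans (sum_l2norm_kernel_op_le n); apply: ler_sum => k _.
apply: le_trans (l2dot_Cauchy_Schwarz (L2e k) (L2fun_kernel_op k)) _.
by rewrite e_on eqxx mul1r.
Qed.

End Hilbert_Schmidt_kernel.

Lemma integrable_Linffun (h : R -> R) : Linffun h -> leb.-integrable I (EFin \o h).
Proof.
move=> [mh [M h_le]]; apply/integrableP; split; first exact/measurable_EFinP.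
apply: (@le_lt_trans _ _ (\int[leb]_(x in I) `|M|%:E)%E).
  apply: ae_ge0_le_integral.
  - exact: measurable_I01.
  - by [].
  - by apply: measurableT_comp => //; exact/measurable_EFinP.
  - by move=> t _; rewrite lee_fin.
  - exact: measurable_cst.
  case: h_le => Z [mZ Z0 sub_Z]; exists Z; split => // t /= not_le.
  apply: sub_Z => /= h_le; apply: not_le => It.
  by rewrite lee_fin (le_trans (h_le It) (ler_norm M)).
rewrite integral_cst; last exact: measurable_I01.
by have := lebesgue_I01; rewrite /= => ->; rewrite mule1 ltry.
Qed.

Lemma integrable_Linffun_mul_sqr (h g : R -> R) : Linffun h -> L2fun g ->
  leb.-integrable I (EFin \o (fun t => g t * g t * h t)).
Proof.
move=> [mh [M h_le]] [mg int_g2].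
have mghh : measurable_fun I (fun t => g t * g t * h t).
  exact: measurable_funM (measurable_funM mg mg) mh.
apply/integrableP; split; first exact/measurable_EFinP.
apply: (@le_lt_trans _ _ (\int[leb]_(x in I) (`|M|%:E * (g x ^+ 2)%:E))%E).
  apply: ae_ge0_le_integral.
  - exact: measurable_I01.
  - by [].
  - by apply: measurableT_comp => //; exact/measurable_EFinP.
  - by move=> t _; rewrite -EFinM lee_fin mulr_ge0 ?sqr_ge0.
  - apply: emeasurable_funM; first exact: measurable_cst.
    by apply/measurable_EFinP; exact: measurable_funX.
  case: h_le => Z [mZ Z0 sub_Z]; exists Z; split => // t /= not_le.
  apply: sub_Z => /= h_le; apply: not_le => It.
  rewrite -EFinM lee_fin normrM -expr2 ger0_norm ?sqr_ge0 // mulrC.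
  by rewrite ler_wpM2r ?sqr_ge0 // (le_trans (h_le It) (ler_norm M)).
rewrite (integralZl measurable_I01 int_g2).
rewrite lte_mul_pinfty // -ge0_fin_numE ?integral_ge0 // => [|t _].
  by have := integrable_fin_num measurable_I01 int_g2.
by rewrite lee_fin sqr_ge0.
Qed.

(* The n-th mean below minus [RI h] is the n-th term of the hypothesis, i.e.
   of the weak uniform density condition tested against [h]. *)
Lemma cvg_Linffun_mean (h : R -> R) (e : nat -> R -> R) : Linffun h ->
  (forall k, L2fun (e k)) ->
  (fun n : nat => RI (fun t => h t * ((n%:R)^-1 * (\sum_(k < n) e k t ^+ 2) - 1)))
    @ \oo --> (0 : R) ->
  (fun n => n%:R^-1 * \sum_(k < n) RI (fun t => (e k t * e k t) * h t)) @ \oo --> RI h.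
Proof.
move=> Linf_h L2e wud.
have int_h := integrable_Linffun Linf_h.
have int_ehe k := integrable_Linffun_mul_sqr Linf_h (L2e k).
suff -> : (fun n => n%:R^-1 * \sum_(k < n) RI (fun t => (e k t * e k t) * h t)) =
    (fun n => RI (fun t => h t * ((n%:R)^-1 * (\sum_(k < n) e k t ^+ 2) - 1)) + RI h).
  by rewrite -[X in _ --> X]add0r; apply: cvgD => //; exact: cvg_cst.
apply/funext => n.
have -> : RI (fun t => h t * ((n%:R)^-1 * (\sum_(k < n) e k t ^+ 2) - 1)) =
    RI (fun t => n%:R^-1 * (\sum_(k < n) e k t * e k t * h t) - h t).
  apply: eq_Rintegral => t _; rewrite mulrBr mulr1 mulrCA mulr_sumr.
  by congr (_ * _ - _); apply: eq_bigr => k _; rewrite expr2 mulrC.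
have int_sum := integrable_sum_EFin (index_enum 'I_n) (fun k : 'I_n => int_ehe k).
rewrite RintegralB.
- rewrite RintegralZl_meas ?Rintegral_sum ?subrK //.
  by apply/measurable_EFinP; exact: measurable_int int_sum.
- exact: measurable_I01.
- have := integrableZl measurable_I01 n%:R^-1 int_sum.
  by apply: eq_integrable; [exact: measurable_I01 | move=> t _ /=; rewrite EFinM].
- exact: int_h.
Qed.

Lemma MCintE N (F : R -> MC R N) i j : MCint F i j = RI (fun t => F t i j).
Proof.
rewrite /MCint -(splitK i); case: (fintype.split i) => k /=.
  by rewrite col_mxEu mxE; apply: eq_Rintegral => t _; rewrite /reE mxE.
by rewrite col_mxEd mxE; apply: eq_Rintegral => t _; rewrite /imE mxE.
Qed.

Lemma L2MC2_entry N (K : R -> R -> MC R N) i j :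
  L2MC2 K -> L2fun2 (fun s t => K s t i j).
Proof.
move=> L2K; rewrite -(splitK i); case: (fintype.split i) => k /=;
  have [L2re L2im] := L2K k j.
  by move: L2re; rewrite /reE; under [fun s t => _]eq_fun do under eq_fun do rewrite mxE.
by move: L2im; rewrite /imE; under [fun s t => _]eq_fun do under eq_fun do rewrite mxE.
Qed.

Lemma LinfMC_entry N (K : R -> MC R N) i j : LinfMC K -> Linffun (fun t => K t i j).
Proof.
move=> LinfK; rewrite -(splitK i); case: (fintype.split i) => k /=;
  have [Lre Lim] := LinfK k j.
  by move: Lre; rewrite /reE; under [fun t => _]eq_fun do rewrite mxE.
by move: Lim; rewrite /imE; under [fun t => _]eq_fun do rewrite mxE.
Qed.

Lemma cvg_mx_entry m n (u : nat -> 'M[R]_(m, n)) (L : 'M[R]_(m, n)) :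
  (forall i j, (fun k => u k i j) @ \oo --> L i j) -> u @ \oo --> L.
Proof.
move=> u_cvg; apply/cvgrPdist_le => /= eps eps_gt0; near=> k.
rewrite /Num.Def.normr /= mx_normrE (bigmax_le _ (ltW eps_gt0)) //= => ij _.
rewrite !mxE /=; move: ij; near: k; apply: filter_forall => /= ij.
exact: ((cvgrPdist_le _ _).1 (u_cvg ij.1 ij.2)).
Unshelve. all: by end_near.
Qed.

Lemma ptens_V0mu d (V0 : tvsType R) (V00 : set V0) (mu : 'I_d) (g : V0) :
  V00 g -> V0mu V00 mu (ptens mu g).
Proof. by move=> V00g; split=> [|nu /negbTE nu_neq]; rewrite /ptens ?eqxx ?nu_neq. Qed.

Section levy_mean_limit.
Variables (d N : nat) (V0 : tvsType R) (iota : V0 -> R -> R) (V00 : set V0).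
Variables (f : Vsp d V0 -> MC R N) (KV : Vsp d V0 -> 'I_d -> R -> R -> MC R N).
Variables (KL : Vsp d V0 -> 'I_d -> R -> MC R N) (e : nat -> V0).
Hypothesis D2f : forall (x : Vsp d V0) (mu : 'I_d),
  [/\ L2MC2 (KV x mu), LinfMC (KL x mu) &
   forall u v : Vsp d V0, V0mu V00 mu u -> V0mu V00 mu v ->
     D2 f x u v =
       MCint2 (fun s t => (iota (u mu) t * iota (v mu) s) *: KV x mu s t)
       + MCint (fun t => (iota (u mu) t * iota (v mu) t) *: KL x mu t)].
Hypothesis e_V00 : forall n, V00 (e n).
Hypothesis L2e : forall k, L2fun (iota (e k)).
Hypothesis e_on : l2orthonormal (fun k => iota (e k)).
Hypothesis e_wud : weakly_uniformly_dense iota e.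

Local Notation E k := (iota (e k)).

Lemma levy_mean_entry x n i j : levy_mean f e x n i j =
  \sum_(mu < d)
    (n%:R^-1 * \sum_(k < n) RI (fun s => RI (fun t => (E k t * E k s) * KV x mu s t i j))
     + n%:R^-1 * \sum_(k < n) RI (fun t => (E k t * E k t) * KL x mu t i j)).
Proof.
rewrite /levy_mean mxE summxE; under eq_bigr do rewrite summxE.
rewrite exchange_big mulr_sumr; apply: eq_bigr => mu _.
rewrite -mulrDr -big_split; congr (_ * _); apply: eq_bigr => k _.
have [_ _ D2E] := D2f x mu.
rewrite D2E; [|exact: ptens_V0mu..].
rewrite /ptens eqxx mxE /MCint2 !MCintE.
congr (_ + _); apply: eq_Rintegral => s _; rewrite ?MCintE ?mxE //.
by apply: eq_Rintegral => t _; rewrite mxE.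
Qed.

Lemma cvg_levy_mean x : levy_mean f e x @ \oo --> \sum_(mu < d) MCint (KL x mu).
Proof.
apply: cvg_mx_entry => i j; under eq_fun do rewrite levy_mean_entry.
rewrite summxE; under eq_bigr do rewrite MCintE -[RI _]add0r.
apply: cvg_big => [|mu _]; first exact: add_continuous.
have [L2KV LinfKL _] := D2f x mu.
apply: cvgD; first exact: cvg_kernel_diagonal_mean (L2MC2_entry i j L2KV) L2e e_on.
have Linf := LinfMC_entry i j LinfKL.
exact: cvg_Linffun_mean Linf L2e (e_wud Linf).
Qed.

End levy_mean_limit.
End levy_laplacian.

Theorem proposition2 (R : realType) (d N : nat) (V0 : tvsType R)
    (iota : V0 -> R -> R) (V00 : set V0) (f : Vsp d V0 -> MC R N)
    (KV : Vsp d V0 -> 'I_d -> R -> R -> MC R N)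
    (KL : Vsp d V0 -> 'I_d -> R -> MC R N) (e : nat -> V0) :
  L2_embedding iota ->
  linear_subspace V00 ->
  C2 f ->
  (forall (x : Vsp d V0) (mu : 'I_d),
     [/\ L2MC2 (KV x mu), LinfMC (KL x mu) &
      forall u v : Vsp d V0, V0mu V00 mu u -> V0mu V00 mu v ->
        D2 f x u v =
          MCint2 (fun s t => (iota (u mu) t * iota (v mu) s) *: KV x mu s t)
          + MCint (fun t => (iota (u mu) t * iota (v mu) t) *: KL x mu t)]) ->
  ONB_L2 iota e ->
  weakly_uniformly_dense iota e ->
  (forall n, V00 (e n)) ->
  levy_dom f e /\
  forall x : Vsp d V0, levy_laplacian f e x = \sum_(mu < d) MCint (KL x mu).
Proof.
move=> [_ L2iota _ _ _] _ C2f D2f [e_on _] e_wud e_V00.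
have mean_cvg := cvg_levy_mean D2f e_V00 (fun k => L2iota (e k)) e_on e_wud.
split; first by split => // x; apply/cvg_ex; eexists; exact: mean_cvg.
by move=> x; exact: cvg_lim (mean_cvg x).
Qed.
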